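(* Let $B\in\mathbb R^{n\times n}$ be symmetric positive semidefinite, let $T\ge1$ be an integer and $\alpha>0$ with $\alpha<1/\rho(B)$ (so that $I-\alpha B$ is positive definite). Define $C=\sum_{t=0}^{T-1}(I-\alpha B)^t$. Then $C$ is invertible and symmetric; and with $M=C^{-1}(I-\alpha B)^T$ and $N=\frac{1}{\alpha}(C^{-1}-M)$, the matrix $N$ is symmetric positive semidefinite and $M$ is symmetric positive definite with \[\frac{(1-\alpha\rho(B))^T}{\sum_{t=0}^{T-1}(1-\alpha\rho(B))^t}I\preceq M\preceq\frac{1}{T}I.\]
   Context: $\rho(B)$ denotes the largest eigenvalue of $B$ (if $B=0$, $1/\rho(B)=\infty$). For symmetric matrices, $S_1\preceq S_2$ means $S_2-S_1$ is positive semidefinite. *)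

From mathcomp Require Import all_boot all_order all_algebra.
Set Implicit Arguments. Unset Strict Implicit. Unset Printing Implicit Defensive.
Import Order.TTheory GRing.Theory Num.Theory.
Local Open Scope ring_scope.

Definition symmetric_mx (R : pzRingType) (n : nat) (A : 'M[R]_n) : Prop := A^T = A.

Definition psd_mx (R : numDomainType) (n : nat) (A : 'M[R]_n) : Prop :=
  symmetric_mx A /\ forall v : 'cV[R]_n, 0 <= (v^T *m A *m v) 0 0.

Definition pd_mx (R : numDomainType) (n : nat) (A : 'M[R]_n) : Prop :=
  symmetric_mx A /\ forall v : 'cV[R]_n, v != 0 -> 0 < (v^T *m A *m v) 0 0.

Definition loewner_le (R : numDomainType) (n : nat) (S1 S2 : 'M[R]_n) : Prop :=
  psd_mx (S2 - S1).

(* Diagonalize B = U^* diag(d) U.  All matrices of the statement are rational functions of B, hence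
   diagonalized by the same U, M with eigenvalues f(x_i) = x_i^T / (1 + x_i + ... + x_i^(T-1)) and
   N with eigenvalues (1 - x_i^T) / (alpha (1 + ... + x_i^(T-1))), where x_i = 1 - alpha d_i lies in
   [1 - alpha rho, 1] because 0 <= d_i <= rho.  Positivity is then scalar, and the Loewner bounds
   follow from f being nondecreasing on (0, oo) and from x^T <= x^t for x <= 1, t <= T.
   The spectral theorem of MathComp is stated over an algebraically closed field, so real matrices
   are diagonalized by a unitary U over R[i]. *)
From mathcomp Require Import all_boot all_order all_algebra.
From mathcomp Require Import complex.
Import Order.TTheory GRing.Theory Num.Theory.
Set Implicit Arguments. Unset Strict Implicit. Unset Printing Implicit Defensive.
Local Open Scope ring_scope.
Local Open Scope sesquilinear_scope.

Section UnitaryDiagonal.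
Variables (C : numClosedFieldType) (n : nat) (U : 'M[C]_n).
Hypothesis U_unitary : U \is unitarymx.

Definition udiag (h : 'I_n -> C) : 'M[C]_n := U ^t* *m diag_mx (\row_i h i) *m U.

Lemma eq_udiag h1 h2 : h1 =1 h2 -> udiag h1 = udiag h2.
Proof.
by move=> eq_h; rewrite /udiag; congr (_ *m diag_mx _ *m _); apply/rowP=> i; rewrite !mxE.
Qed.

Lemma udiagD h1 h2 : udiag h1 + udiag h2 = udiag (fun i => h1 i + h2 i).
Proof.
rewrite /udiag -mulmxDl -mulmxDr -linearD /=.
by congr (_ *m diag_mx _ *m _); apply/rowP=> i; rewrite !mxE.
Qed.

Lemma udiagB h1 h2 : udiag h1 - udiag h2 = udiag (fun i => h1 i - h2 i).
Proof.
rewrite /udiag -mulmxBl -mulmxBr -linearB /=.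
by congr (_ *m diag_mx _ *m _); apply/rowP=> i; rewrite !mxE.
Qed.

Lemma udiagZ a h : a *: udiag h = udiag (fun i => a * h i).
Proof.
rewrite /udiag scalemxAl scalemxAr -linearZ /=.
by congr (_ *m diag_mx _ *m _); apply/rowP=> i; rewrite !mxE.
Qed.

Lemma udiag_const a : udiag (fun=> a) = a%:M.
Proof.
rewrite /udiag (_ : \row__ _ = const_mx a); last by apply/rowP=> i; rewrite !mxE.
rewrite diag_const_mx mul_mx_scalar -scalemxAl -invmx_unitary //.
by rewrite mulVmx ?unitarymx_unit // scalemx1.
Qed.

Lemma udiagM h1 h2 : udiag h1 *m udiag h2 = udiag (fun i => h1 i * h2 i).
Proof.
rewrite /udiag !mulmxA mulmxtVK // -[_ *m diag_mx _ *m diag_mx _]mulmxA mulmx_diag.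
by congr (_ *m diag_mx _ *m _); apply/rowP=> i; rewrite !mxE.
Qed.

Lemma udiag_adj h : (forall i, h i \is Num.real) -> (udiag h) ^t* = udiag h.
Proof.
move=> h_real; rewrite /udiag !trmx_mul !map_mxM trmxCK tr_diag_mx map_diag_mx mulmxA.
by congr (_ *m diag_mx _ *m _); apply/rowP=> i; rewrite !mxE; apply: conj_Creal.
Qed.

Lemma udiag_form h (w : 'cV[C]_n) :
  (w ^t* *m udiag h *m w) 0 0 = \sum_i h i * `|(U *m w) i 0| ^+ 2.
Proof.
have -> : w ^t* *m udiag h *m w = (U *m w) ^t* *m diag_mx (\row_i h i) *m (U *m w).
  by rewrite /udiag trmx_mul map_mxM !mulmxA.
rewrite mul_mx_diag !mxE; apply: eq_bigr => i _.
by rewrite !mxE normCK [_ * h i]mulrC -mulrA [_^* * _]mulrC.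
Qed.

Lemma udiag_form_ge0 h (w : 'cV[C]_n) :
  (forall i, 0 <= h i) -> 0 <= (w ^t* *m udiag h *m w) 0 0.
Proof.
by move=> h_ge0; rewrite udiag_form sumr_ge0 // => i _; rewrite mulr_ge0 ?exprn_ge0.
Qed.

Lemma udiag_form_gt0 h (w : 'cV[C]_n) :
  (forall i, 0 < h i) -> w != 0 -> 0 < (w ^t* *m udiag h *m w) 0 0.
Proof.
move=> h_gt0 w_neq0; rewrite lt_def udiag_form_ge0 => [|i]; last exact: ltW.
rewrite andbT udiag_form; apply: contra w_neq0 => /eqP /psumr_eq0P form0.
suff Uw0 : U *m w = 0 by rewrite -(mulKmx (unitarymx_unit U_unitary) w) Uw0 mulmx0.
apply/matrixP=> i j; rewrite ord1 [RHS]mxE; apply/eqP.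
have /eqP := form0 (fun i _ => mulr_ge0 (ltW (h_gt0 i)) (exprn_ge0 2 (normr_ge0 _))) i isT.
by rewrite mulf_eq0 (gt_eqF (h_gt0 i)) sqrf_eq0 normr_eq0.
Qed.

Lemma eigenvalue_udiag h i : eigenvalue (udiag h) (h i).
Proof.
apply/eigenvalueP; exists ('e_i *m U).
  rewrite /udiag !mulmxA mulmxtVK // scalemxAl; congr (_ *m _).
  apply/rowP=> j; rewrite mul_mx_diag !mxE.
  by rewrite eqxx mulrC; case: eqVneq => [->|_] //=; rewrite !mulr0n !mulr0.
rewrite (mulmx_free_eq0 _ (B:=U)) ?row_free_unit ?unitarymx_unit //.
by apply/negP=> /eqP/rowP/(_ i); rewrite !mxE !eqxx => /eqP; rewrite oner_eq0.
Qed.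

End UnitaryDiagonal.

Lemma adj_map_real_mx (R : rcfType) m p (A : 'M[R]_(m, p)) :
  (map_mx (real_complex R) A) ^t* = map_mx (real_complex R) A^T.
Proof.
by apply/matrixP=> i j; rewrite !mxE; apply/conj_Creal/complex_realP; exists (A j i).
Qed.

Section RealDiagonalization.
Variables (R : rcfType) (n : nat) (U : 'M[R[i]]_n).
Hypothesis U_unitary : U \is unitarymx.

Definition diagonalizes (X : 'M[R]_n) (h : 'I_n -> R) : Prop :=
  map_mx (real_complex R) X = udiag U (fun i => real_complex R (h i)).

Lemma eq_diagonalizes X h1 h2 : h1 =1 h2 -> diagonalizes X h1 -> diagonalizes X h2.
Proof. by move=> eq_h; rewrite /diagonalizes => ->; apply: eq_udiag => i; rewrite eq_h. Qed.

Lemma diagonalizes_scalar a : diagonalizes a%:M (fun=> a).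
Proof. by rewrite /diagonalizes map_scalar_mx udiag_const. Qed.

Lemma diagonalizesD X Y hX hY : diagonalizes X hX -> diagonalizes Y hY ->
  diagonalizes (X + Y) (fun i => hX i + hY i).
Proof.
move=> Xh Yh; rewrite /diagonalizes map_mxD Xh Yh udiagD.
by apply: eq_udiag => i; rewrite rmorphD.
Qed.

Lemma diagonalizesB X Y hX hY : diagonalizes X hX -> diagonalizes Y hY ->
  diagonalizes (X - Y) (fun i => hX i - hY i).
Proof.
move=> Xh Yh; rewrite /diagonalizes map_mxB Xh Yh udiagB.
by apply: eq_udiag => i; rewrite rmorphB.
Qed.

Lemma diagonalizesZ a X h : diagonalizes X h -> diagonalizes (a *: X) (fun i => a * h i).
Proof.
move=> Xh; rewrite /diagonalizes map_mxZ Xh udiagZ.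
by apply: eq_udiag => i; rewrite rmorphM.
Qed.

Lemma diagonalizesM X Y hX hY : diagonalizes X hX -> diagonalizes Y hY ->
  diagonalizes (X *m Y) (fun i => hX i * hY i).
Proof.
move=> Xh Yh; rewrite /diagonalizes map_mxM Xh Yh (udiagM U_unitary).
by apply: eq_udiag => i; rewrite rmorphM.
Qed.

Lemma diagonalizesX X h k : diagonalizes X h -> diagonalizes (X ^+ k) (fun i => h i ^+ k).
Proof.
move=> Xh; elim: k => [|k IHk].
  by apply: eq_diagonalizes (diagonalizes_scalar 1) => i; rewrite expr0.
by rewrite exprS; apply: eq_diagonalizes (diagonalizesM Xh IHk) => i; rewrite exprS.
Qed.

Lemma diagonalizes_sum (I : Type) (r : seq I) (P : pred I) (X : I -> 'M_n) h :
  (forall j, P j -> diagonalizes (X j) (h j)) ->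
  diagonalizes (\sum_(j <- r | P j) X j) (fun i => \sum_(j <- r | P j) h j i).
Proof.
move=> Xh; elim: r => [|j r IHr].
  rewrite big_nil -(raddf0 (@scalar_mx R n)).
  apply: eq_diagonalizes (diagonalizes_scalar 0) => i.
  by rewrite big_nil.
rewrite big_cons; case: ifP => Pj; last first.
  by apply: eq_diagonalizes IHr => i; rewrite big_cons Pj.
by apply: eq_diagonalizes (diagonalizesD (Xh j Pj) IHr) => i; rewrite big_cons Pj.
Qed.

Lemma diagonalizes_inv X h : diagonalizes X h -> (forall i, h i != 0) ->
  X \in unitmx /\ diagonalizes (invmx X) (fun i => (h i)^-1).
Proof.
move=> Xh h_neq0.
have XhV1 : map_mx (real_complex R) X *m udiag U (fun i => real_complex R (h i)^-1) = 1%:M.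
  rewrite Xh (udiagM U_unitary) -(udiag_const U_unitary).
  by apply: eq_udiag => i; rewrite -rmorphM mulfV ?rmorph1 ?h_neq0.
have XC_unit : map_mx (real_complex R) X \in unitmx by case/mulmx1_unit: XhV1.
split; first by rewrite -(map_unitmx (real_complex R)).
rewrite /diagonalizes map_invmx -[invmx _]mulmx1 -XhV1 mulmxA (mulVmx XC_unit).
exact: mul1mx.
Qed.

Lemma diagonalizes_sym X h : diagonalizes X h -> symmetric_mx X.
Proof.
move=> Xh; apply: (map_mx_inj (f := real_complex R)) => /=.
rewrite -adj_map_real_mx Xh udiag_adj // => i.
by apply/complex_realP; exists (h i).
Qed.

Lemma map_real_form (X : 'M[R]_n) (v : 'cV[R]_n) :
  real_complex R ((v^T *m X *m v) 0 0) =
  ((map_mx (real_complex R) v) ^t* *m map_mx (real_complex R) X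
     *m map_mx (real_complex R) v) 0 0.
Proof. by rewrite adj_map_real_mx -!map_mxM [RHS]mxE. Qed.

Lemma diagonalizes_psd X h : diagonalizes X h -> (forall i, 0 <= h i) -> psd_mx X.
Proof.
move=> Xh h_ge0; split=> [|v]; first exact: diagonalizes_sym Xh.
by rewrite -ler0c map_real_form Xh udiag_form_ge0 // => i; rewrite ler0c.
Qed.

Lemma diagonalizes_pd X h : diagonalizes X h -> (forall i, 0 < h i) -> pd_mx X.
Proof.
move=> Xh h_gt0; split=> [|v v_neq0]; first exact: diagonalizes_sym Xh.
rewrite -(ltcR 0) map_real_form Xh (udiag_form_gt0 U_unitary) // => [i|].
  by rewrite (ltcR 0).
by rewrite map_mx_eq0.
Qed.

End RealDiagonalization.

Lemma symmetric_mx_diagonalizable (R : rcfType) n (B : 'M[R]_n) : symmetric_mx B ->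
  exists U : 'M[R[i]]_n, exists d : 'I_n -> R,
    [/\ U \is unitarymx, diagonalizes U B d & forall i, eigenvalue B (d i)].
Proof.
move=> B_sym; set BC := map_mx (real_complex R) B.
have BC_herm : BC \is hermsymmx.
  by apply/is_hermitianmxP; rewrite expr0 scale1r adj_map_real_mx B_sym.
have /orthomx_spectralP BC_spec := hermitian_normalmx BC_herm.
set U := spectralmx BC in BC_spec; set D := spectral_diag BC in BC_spec.
have U_unitary : U \is unitarymx := spectral_unitarymx BC.
have D_real i : real_complex R (complex.Re (D 0 i)) = D 0 i.
  exact/RRe_real/(mxOverP (hermitian_spectral_diag_real BC_herm)).
have Bd : diagonalizes U B (fun i => complex.Re (D 0 i)).
  have D_row : D = \row_i real_complex R (complex.Re (D 0 i)).
    by apply/rowP=> i; rewrite mxE D_real.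
  by rewrite /diagonalizes -/BC {1}BC_spec (invmx_unitary U_unitary) {1}D_row.
exists U, (fun i => complex.Re (D 0 i)); split; [exact: U_unitary | exact: Bd | move=> i].
have := eigenvalue_udiag U_unitary (fun i => real_complex R (complex.Re (D 0 i))) i.
by rewrite -Bd !eigenvalue_root_char -map_char_poly fmorph_root.
Qed.

Lemma psd_mx_eigenvalue_ge0 (R : realFieldType) n (B : 'M[R]_n) a :
  psd_mx B -> eigenvalue B a -> 0 <= a.
Proof.
move=> [_ B_form] /eigenvalueP [v vB v_neq0].
have vvT_gt0 : 0 < (v *m v^T) 0 0.
  have -> : (v *m v^T) 0 0 = \sum_j v 0 j ^+ 2.
    by rewrite mxE; apply: eq_bigr => j _; rewrite mxE expr2.
  rewrite lt_def sumr_ge0 ?andbT => [|j _]; last exact: sqr_ge0.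
  apply: contra v_neq0 => /eqP /psumr_eq0P v0; apply/eqP/rowP=> j.
  by apply/eqP; rewrite mxE -sqrf_eq0 v0 // => k _; apply: sqr_ge0.
by have := B_form v^T; rewrite trmxK vB -scalemxAl mxE pmulr_lge0.
Qed.

Lemma geom_sum_gt0 (R : numDomainType) (x : R) T : 0 <= x -> (0 < T)%N ->
  0 < \sum_(t < T) x ^+ t.
Proof.
case: T => // T x_ge0 _; rewrite big_ord_recl expr0 ltr_pwDl //.
by rewrite sumr_ge0 // => t _; apply: exprn_ge0.
Qed.

Lemma ler_geom_ratio (R : realFieldType) (x y : R) T : 0 < x -> x <= y ->
  x ^+ T / \sum_(t < T) x ^+ t <= y ^+ T / \sum_(t < T) y ^+ t.
Proof.
case: T => [|T]; first by rewrite !big_ord0 !invr0 !mulr0.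
move=> x_gt0 le_xy; have x_ge0 := ltW x_gt0; have y_ge0 := le_trans x_ge0 le_xy.
(* after cross-multiplying, compare termwise: x^T y^t <= y^T x^t as x^(T-t) <= y^(T-t) *)
rewrite ler_pdivlMr ?geom_sum_gt0 // mulrAC ler_pdivrMr ?geom_sum_gt0 //.
rewrite !mulr_sumr; apply: ler_sum => t _.
have -> : x ^+ T.+1 = x ^+ (T.+1 - t) * x ^+ t by rewrite -exprD subnK // ltnW.
have -> : y ^+ T.+1 = y ^+ (T.+1 - t) * y ^+ t by rewrite -exprD subnK // ltnW.
rewrite -!mulrA [y ^+ t * _]mulrC ler_wpM2r ?mulr_ge0 ?exprn_ge0 //.
by rewrite lerXn2r.
Qed.

Lemma geom_ratio_le_invn (R : realFieldType) (x : R) T : 0 < x -> x <= 1 ->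
  x ^+ T / \sum_(t < T) x ^+ t <= T%:R^-1.
Proof.
case: T => [|T]; first by rewrite big_ord0 !invr0 mulr0.
move=> x_gt0 x_le1; have x_ge0 := ltW x_gt0.
rewrite ler_pdivrMr ?geom_sum_gt0 // mulrC ler_pdivlMr ?ltr0n //.
rewrite mulr_natr -[X in _ *+ X](card_ord T.+1) -sumr_const.
by apply: ler_sum => t _; rewrite ler_wiXn2l // ltnW.
Qed.

Theorem lemma3p14 (R : rcfType) (n : nat) (B : 'M[R]_n)
  (rho : R) (T : nat) (alpha : R) :
  psd_mx B ->
  eigenvalue B rho ->
  (forall a : R, eigenvalue B a -> a <= rho) ->
  (1 <= T)%N ->
  0 < alpha ->
  alpha * rho < 1 ->
  let C := \sum_(t < T) (1%:M - alpha *: B) ^+ t in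
  let M := invmx C *m (1%:M - alpha *: B) ^+ T in
  let N := alpha^-1 *: (invmx C - M) in
  [/\ C \in unitmx, symmetric_mx C, psd_mx N, pd_mx M &
      loewner_le (((1 - alpha * rho) ^+ T / \sum_(t < T) (1 - alpha * rho) ^+ t)%:M) M
      /\ loewner_le M ((T%:R)^-1%:M)].
Proof.
move=> B_psd _ rho_max T_gt0 alpha_gt0 alpha_rho_lt1 C M N.
have [U [d [U_unitary Bd d_eig]]] := symmetric_mx_diagonalizable (proj1 B_psd).
pose a i := 1 - alpha * d i; pose S i := \sum_(t < T) a i ^+ t.
have arho_gt0 : 0 < 1 - alpha * rho by rewrite subr_gt0.
have arho_le_a i : 1 - alpha * rho <= a i by rewrite /a lerD2l lerN2 ler_pM2l ?rho_max.
have a_le1 i : a i <= 1.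
  by rewrite /a gerBl mulr_ge0 ?(psd_mx_eigenvalue_ge0 B_psd (d_eig i)) // ltW.
have a_gt0 i : 0 < a i := lt_le_trans arho_gt0 (arho_le_a i).
have S_gt0 i : 0 < S i by rewrite geom_sum_gt0 ?(ltW (a_gt0 i)).
have Ad : diagonalizes U (1%:M - alpha *: B) a.
  exact: diagonalizesB (diagonalizes_scalar U_unitary 1) (diagonalizesZ alpha Bd).
have Cd : diagonalizes U C S.
  exact (diagonalizes_sum U_unitary (index_enum _)
           (fun (t : 'I_T) (_ : true) => diagonalizesX U_unitary t Ad)).
have [C_unit Cinv_d] := diagonalizes_inv U_unitary Cd (fun i => lt0r_neq0 (S_gt0 i)).
have Md : diagonalizes U M (fun i => (S i)^-1 * a i ^+ T).
  exact (diagonalizesM U_unitary Cinv_d (diagonalizesX U_unitary T Ad)).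
have Nd : diagonalizes U N (fun i => alpha^-1 * ((S i)^-1 - (S i)^-1 * a i ^+ T)).
  exact (diagonalizesZ _ (diagonalizesB Cinv_d Md)).
split.
- exact: C_unit.
- exact: diagonalizes_sym Cd.
- apply: (diagonalizes_psd Nd) => i.
  rewrite mulr_ge0 ?invr_ge0 ?(ltW alpha_gt0) // subr_ge0 ger_pMr ?invr_gt0 ?S_gt0 //.
  by rewrite exprn_ile1 ?a_le1 ?(ltW (a_gt0 i)).
- apply: (diagonalizes_pd U_unitary Md) => i.
  by rewrite mulr_gt0 ?invr_gt0 ?exprn_gt0 ?S_gt0 ?a_gt0.
split; [apply: (diagonalizes_psd (diagonalizesB Md (diagonalizes_scalar U_unitary _))) |
        apply: (diagonalizes_psd (diagonalizesB (diagonalizes_scalar U_unitary _) Md))] => i;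
  rewrite subr_ge0 ![_^-1 * _]mulrC.
- exact: ler_geom_ratio arho_gt0 (arho_le_a i).
- exact: geom_ratio_le_invn (a_gt0 i) (a_le1 i).
Qed.
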